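(* For every CCCP configuration $\mathcal C=\Gamma\triangleright W$: if $\mathcal C\xrightarrow{\sigma}W_1$ and $\mathcal C\xrightarrow{\sigma}W_2$, then $W_1=W_2$.
   Context: CCCP syntax. Fix a set of channels (ranged over by $c,d$) and a set of values containing data variables $x,y$ and a special error value $\mathtt{err}$; closed values $v,w$ contain no variables, and each closed value $v$ has a transmission time $\delta_v\in\mathbb{N}$ with $\delta_v\ge 1$. Expressions $e$ are built from values; closed expressions evaluate to closed values via $[\![e]\!]$. Station code (processes) is given by $P,Q ::= c!\langle e\rangle.P \mid \lfloor ?c(x).P\rfloor Q \mid \sigma.P \mid \tau.P \mid P+Q \mid [b]P,Q \mid X \mid \mathbf{0} \mid \mathrm{fix}\,X.P$, where $b$ is either $e_1=e_2$ or $\mathrm{exp}(c)$, $[b]P,Q$ is a conditional (then-branch $P$, else-branch $Q$), $\lfloor ?c(x).P\rfloor Q$ is a receiver on $c$ with timeout branch $Q$ ($x$ bound in $P$), $\sigma.P$ is a one-unit delay and $\sigma^n.P$ denotes $n$ nested delays. System terms are $W ::= P \mid \lfloor ?c(x).P\rfloor \mid W_1|W_2 \mid \nu c{:}(n,v).W$, where $\lfloor ?c(x).P\rfloor$ is an active receiver ($x$ bound in $P$) and $\nu c{:}(n,v).W$ restricts $c$ with local channel state $(n,v)$. In $\mathrm{fix}\,X.P$ every occurrence of $X$ in $P$ is guarded, i.e. lies within a broadcast prefix, a receiver continuation, a timeout branch, a $\sigma$-prefix, or a branch of a conditional. Terms are identified up to $\alpha$-conversion. A channel environment is a map $\Gamma$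 from channels to $\mathbb{N}\times$(closed values); write $\Gamma\vdash_t c:n$ and $\Gamma\vdash_v c:w$ when $\Gamma(c)=(n,w)$; $c$ is idle in $\Gamma$ if $\Gamma\vdash_t c:0$ and exposed otherwise; $\Gamma[c\mapsto(n,v)]$ is $\Gamma$ updated at $c$; $\Gamma\le\Gamma'$ iff for every $c$, $\Gamma\vdash_t c:n$ and $\Gamma'\vdash_t c:m$ imply $n\le m$. A configuration $\Gamma\triangleright W$ is a channel environment together with a closed system term (no free data or process variables). Intensional semantics. Actions $\lambda$ are $c!v$, $c?v$, $\sigma$, $\tau$. The environment update $\lambda(\Gamma)$ is: $\sigma(\Gamma)(c)=(\max(n-1,0),w)$ whenever $\Gamma(c)=(n,w)$; $c!v(\Gamma)$ agrees with $\Gamma$ except at $c$, where it is $(\delta_v,v)$ if $c$ is idle in $\Gamma$ and $(\max(\delta_v,n),\mathtt{err})$ if $\Gamma\vdash_t c:n>0$; $c?v(\Gamma)=c!v(\Gamma)$; $\tau(\Gamma)=\Gamma$. The predicate $\mathrm{rcv}(W,c)$ on terms is: true for $\lfloor ?d(x).P\rfloor Q$ iff $d=c$; $\mathrm{rcv}(P+Q,c)=\mathrm{rcv}(P,c)\vee\mathrm{rcv}(Q,c)$; $\mathrm{rcv}(\mathrm{fix}\,X.P,c)=\mathrm{rcv}(P,c)$; $\mathrm{rcv}(W_1|W_2,c)=\mathrm{rcv}(W_1,c)\vee\mathrm{rcv}(W_2,c)$; $\mathrm{rcv}(\nu d{:}(n,v).W,c)=\mathrm{rcv}(W,c)$ (with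 $d\neq c$ by $\alpha$-conversion); false for all other forms (broadcasts, $\tau.P$, $\sigma.P$, conditionals, $X$, $\mathbf 0$, active receivers). Then $\mathrm{rcv}(\Gamma\triangleright W,c)$ holds iff $c$ is idle in $\Gamma$ and $\mathrm{rcv}(W,c)$. Transitions $\Gamma\triangleright W\xrightarrow{\lambda}W'$ are the least relation closed under: (Snd) $[\![e]\!]=v$ implies $\Gamma\triangleright c!\langle e\rangle.P\xrightarrow{c!v}\sigma^{\delta_v}.P$; (Rcv) $c$ idle in $\Gamma$ implies $\Gamma\triangleright\lfloor ?c(x).P\rfloor Q\xrightarrow{c?v}\lfloor ?c(x).P\rfloor$; (RcvIgn) $\neg\mathrm{rcv}(\Gamma\triangleright W,c)$ implies $\Gamma\triangleright W\xrightarrow{c?v}W$; (Sync) $\Gamma\triangleright W_1\xrightarrow{c!v}W_1'$ and $\Gamma\triangleright W_2\xrightarrow{c?v}W_2'$ imply $\Gamma\triangleright W_1|W_2\xrightarrow{c!v}W_1'|W_2'$, and symmetrically; (RcvPar) $\Gamma\triangleright W_i\xrightarrow{c?v}W_i'$ for $i=1,2$ imply $\Gamma\triangleright W_1|W_2\xrightarrow{c?v}W_1'|W_2'$; (TimeNil) $\Gamma\triangleright\mathbf 0\xrightarrow{\sigma}\mathbf 0$; (Sleep) $\Gamma\triangleright\sigma.P\xrightarrow{\sigma}P$; (ActRcv) $\Gamma\vdash_t c:n$, $n>1$ imply $\Gamma\triangleright\lfloor ?c(x).P\rfloor\xrightarrow{\sigma}\lfloor ?c(x).P\rfloor$; (EndRcv)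 $\Gamma\vdash_t c:1$, $\Gamma\vdash_v c:w$ imply $\Gamma\triangleright\lfloor ?c(x).P\rfloor\xrightarrow{\sigma}\{w/x\}P$; (Timeout) $c$ idle in $\Gamma$ implies $\Gamma\triangleright\lfloor ?c(x).P\rfloor Q\xrightarrow{\sigma}Q$; (RcvLate) $c$ exposed in $\Gamma$ implies $\Gamma\triangleright\lfloor ?c(x).P\rfloor Q\xrightarrow{\tau}\lfloor ?c(x).\{\mathtt{err}/x\}P\rfloor$; (Tau) $\Gamma\triangleright\tau.P\xrightarrow{\tau}P$; (Then)/(Else) $\Gamma\triangleright[b]P,Q\xrightarrow{\tau}\sigma.P$ if $[\![b]\!]_\Gamma$ is true and $\xrightarrow{\tau}\sigma.Q$ otherwise, where $[\![e_1=e_2]\!]_\Gamma$ is true iff $[\![e_1]\!]=[\![e_2]\!]$ and $[\![\mathrm{exp}(c)]\!]_\Gamma$ is true iff $c$ is exposed in $\Gamma$; (TimePar) $\Gamma\triangleright W_i\xrightarrow{\sigma}W_i'$ for $i=1,2$ imply $\Gamma\triangleright W_1|W_2\xrightarrow{\sigma}W_1'|W_2'$; (TauPar) $\Gamma\triangleright W_1\xrightarrow{\tau}W_1'$ implies $\Gamma\triangleright W_1|W_2\xrightarrow{\tau}W_1'|W_2$, and symmetrically; (Rec) $\Gamma\triangleright\{\mathrm{fix}\,X.P/X\}P\xrightarrow{\lambda}W$ implies $\Gamma\triangleright\mathrm{fix}\,X.P\xrightarrow{\lambda}W$; (Sum) for $\lambda\in\{\tau,c!v\}$, $\Gamma\triangleright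 P\xrightarrow{\lambda}W$ implies $\Gamma\triangleright P+Q\xrightarrow{\lambda}W$, and symmetrically; (SumTime) $\Gamma\triangleright P\xrightarrow{\sigma}P'$, $\Gamma\triangleright Q\xrightarrow{\sigma}Q'$ imply $\Gamma\triangleright P+Q\xrightarrow{\sigma}P'+Q'$; (SumRcv) $\Gamma\triangleright P\xrightarrow{c?v}W$ and $\mathrm{rcv}(\Gamma\triangleright P,c)$ imply $\Gamma\triangleright P+Q\xrightarrow{c?v}W$, and symmetrically; (ResI) $\Gamma[c\mapsto(n,v)]\triangleright W\xrightarrow{c!w}W'$ implies $\Gamma\triangleright\nu c{:}(n,v).W\xrightarrow{\tau}\nu c{:}(c!w(\Gamma[c\mapsto(n,v)]))(c).W'$; (ResV) $\Gamma[c\mapsto(n,v)]\triangleright W\xrightarrow{\lambda}W'$ with $c$ not occurring in $\lambda$ implies $\Gamma\triangleright\nu c{:}(n,v).W\xrightarrow{\lambda}\nu c{:}(\lambda(\Gamma[c\mapsto(n,v)]))(c).W'$. *)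

From Stdlib Require Import Arith List PeanoNat.
Import ListNotations.

Set Implicit Arguments.

Section CCCP.

(* Parameters of the calculus:
   K      : base (closed, non-error) data constants;
   F      : operation symbols used to build expressions from values;
   interp : interpretation of operation symbols on closed values;
   delta  : transmission time of a closed value (assumed >= 1 in the theorem). *)
Variable K : Type.
Variable F : Type.

Inductive cval : Type :=
| CErr : cval
| CConst : K -> cval.

Variable interp : F -> list cval -> cval.
Variable delta : cval -> nat.

Definition chan := nat.
Definition dvar := nat.
Definition pvar := nat.

Inductive value : Type :=
| VVar : dvar -> value
| VErr : value
| VConst : K -> value.

Definition val_of_cval (w : cval) : value :=
  match w with CErr => VErr | CConst k => VConst k end.

Inductive expr : Type :=
| EVal : value -> expr
| EApp : F -> list expr -> expr.

Inductive bexp : Type :=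
| BEq : expr -> expr -> bexp
| BExp : chan -> bexp.

Inductive proc : Type :=
| PSnd : chan -> expr -> proc -> proc
| PRcv : chan -> dvar -> proc -> proc -> proc    (* |_?c(x).P_| Q, x bound in P only *)
| PSig : proc -> proc
| PTau : proc -> proc
| PSum : proc -> proc -> proc
| PCond : bexp -> proc -> proc -> proc
| PVar : pvar -> proc
| PNil : proc
| PFix : pvar -> proc -> proc.

Inductive sys : Type :=
| SProc : proc -> sys
| SActRcv : chan -> dvar -> proc -> sys
| SPar : sys -> sys -> sys
| SRes : chan -> nat -> cval -> sys -> sys.

Fixpoint sigman (n : nat) (P : proc) : proc :=
  match n with 0 => P | S m => PSig (sigman m P) end.

Fixpoint eval (e : expr) : option cval :=
  match e with
  | EVal (VVar _) => None
  | EVal VErr => Some CErr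
  | EVal (VConst k) => Some (CConst k)
  | EApp f args =>
      let fix evals (l : list expr) : option (list cval) :=
        match l with
        | [] => Some []
        | e' :: l' =>
            match eval e', evals l' with
            | Some v, Some vs => Some (v :: vs)
            | _, _ => None
            end
        end in
      match evals args with
      | Some vs => Some (interp f vs)
      | None => None
      end
  end.

Definition subst_val (w : cval) (x : dvar) (v : value) : value :=
  match v with
  | VVar y => if Nat.eqb y x then val_of_cval w else VVar y
  | _ => v
  end.

Fixpoint subst_expr (w : cval) (x : dvar) (e : expr) : expr :=
  match e with
  | EVal v => EVal (subst_val w x v)
  | EApp f args => EApp f (map (subst_expr w x) args)
  end.

Definition subst_bexp (w : cval) (x : dvar) (b : bexp) : bexp :=
  match b with
  | BEq e1 e2 => BEq (subst_expr w x e1) (subst_expr w x e2)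
  | BExp c => BExp c
  end.

(* {w/x}P ; w is closed so no capture can occur *)
Fixpoint subst (w : cval) (x : dvar) (P : proc) : proc :=
  match P with
  | PSnd c e P' => PSnd c (subst_expr w x e) (subst w x P')
  | PRcv c y P' Q => PRcv c y (if Nat.eqb y x then P' else subst w x P') (subst w x Q)
  | PSig P' => PSig (subst w x P')
  | PTau P' => PTau (subst w x P')
  | PSum P1 P2 => PSum (subst w x P1) (subst w x P2)
  | PCond b P1 P2 => PCond (subst_bexp w x b) (subst w x P1) (subst w x P2)
  | PVar X => PVar X
  | PNil => PNil
  | PFix X P' => PFix X (subst w x P')
  end.

(* {R/X}P ; used with R = fix X.P closed, so no capture can occur *)
Fixpoint psubst (R : proc) (X : pvar) (P : proc) : proc :=
  match P with
  | PSnd c e P' => PSnd c e (psubst R X P')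
  | PRcv c y P' Q => PRcv c y (psubst R X P') (psubst R X Q)
  | PSig P' => PSig (psubst R X P')
  | PTau P' => PTau (psubst R X P')
  | PSum P1 P2 => PSum (psubst R X P1) (psubst R X P2)
  | PCond b P1 P2 => PCond b (psubst R X P1) (psubst R X P2)
  | PVar Y => if Nat.eqb Y X then R else PVar Y
  | PNil => PNil
  | PFix Y P' => if Nat.eqb Y X then PFix Y P' else PFix Y (psubst R X P')
  end.

Fixpoint guarded (X : pvar) (P : proc) : Prop :=
  match P with
  | PSnd _ _ _ => True
  | PRcv _ _ _ _ => True
  | PSig _ => True
  | PTau P' => guarded X P'
  | PSum P1 P2 => guarded X P1 /\ guarded X P2
  | PCond _ _ _ => True
  | PVar Y => Y <> X
  | PNil => True
  | PFix Y P' => Y = X \/ guarded X P'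
  end.

Fixpoint wf_proc (P : proc) : Prop :=
  match P with
  | PSnd _ _ P' => wf_proc P'
  | PRcv _ _ P' Q => wf_proc P' /\ wf_proc Q
  | PSig P' => wf_proc P'
  | PTau P' => wf_proc P'
  | PSum P1 P2 => wf_proc P1 /\ wf_proc P2
  | PCond _ P1 P2 => wf_proc P1 /\ wf_proc P2
  | PVar _ => True
  | PNil => True
  | PFix X P' => guarded X P' /\ wf_proc P'
  end.

Fixpoint wf_sys (W : sys) : Prop :=
  match W with
  | SProc P => wf_proc P
  | SActRcv _ _ P => wf_proc P
  | SPar W1 W2 => wf_sys W1 /\ wf_sys W2
  | SRes _ _ _ W' => wf_sys W'
  end.

Fixpoint expr_closed_in (xs : list dvar) (e : expr) : Prop :=
  match e with
  | EVal (VVar y) => In y xs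
  | EVal _ => True
  | EApp _ args =>
      let fix all_closed (l : list expr) : Prop :=
        match l with
        | [] => True
        | e' :: l' => expr_closed_in xs e' /\ all_closed l'
        end in
      all_closed args
  end.

Definition bexp_closed_in (xs : list dvar) (b : bexp) : Prop :=
  match b with
  | BEq e1 e2 => expr_closed_in xs e1 /\ expr_closed_in xs e2
  | BExp _ => True
  end.

Fixpoint proc_closed_in (xs : list dvar) (Xs : list pvar) (P : proc) : Prop :=
  match P with
  | PSnd _ e P' => expr_closed_in xs e /\ proc_closed_in xs Xs P'
  | PRcv _ y P' Q => proc_closed_in (y :: xs) Xs P' /\ proc_closed_in xs Xs Q
  | PSig P' => proc_closed_in xs Xs P'
  | PTau P' => proc_closed_in xs Xs P'
  | PSum P1 P2 => proc_closed_in xs Xs P1 /\ proc_closed_in xs Xs P2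
  | PCond b P1 P2 =>
      bexp_closed_in xs b /\ proc_closed_in xs Xs P1 /\ proc_closed_in xs Xs P2
  | PVar X => In X Xs
  | PNil => True
  | PFix X P' => proc_closed_in xs (X :: Xs) P'
  end.

Fixpoint sys_closed (W : sys) : Prop :=
  match W with
  | SProc P => proc_closed_in [] [] P
  | SActRcv _ y P => proc_closed_in [y] [] P
  | SPar W1 W2 => sys_closed W1 /\ sys_closed W2
  | SRes _ _ _ W' => sys_closed W'
  end.

Definition config_term (W : sys) : Prop := wf_sys W /\ sys_closed W.

Definition env := chan -> nat * cval.

Definition upd (G : env) (c : chan) (nv : nat * cval) : env :=
  fun d => if Nat.eqb d c then nv else G d.

Definition idle (G : env) (c : chan) : Prop := fst (G c) = 0.
Definition exposed (G : env) (c : chan) : Prop := fst (G c) <> 0.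

Inductive action : Type :=
| ASnd : chan -> cval -> action
| ARcv : chan -> cval -> action
| ASig : action
| ATau : action.

Definition bcast_upd (c : chan) (v : cval) (G : env) : env :=
  let n := fst (G c) in
  if Nat.eqb n 0 then upd G c (delta v, v)
  else upd G c (Nat.max (delta v) n, CErr).

Definition act_env (l : action) (G : env) : env :=
  match l with
  | ASig => fun c => (fst (G c) - 1, snd (G c))
  | ASnd c v => bcast_upd c v G
  | ARcv c v => bcast_upd c v G
  | ATau => G
  end.

Definition occurs_in (c : chan) (l : action) : Prop :=
  match l with
  | ASnd d _ => d = c
  | ARcv d _ => d = c
  | _ => False
  end.

Fixpoint rcv_proc (P : proc) (c : chan) : Prop :=
  match P with
  | PRcv d _ _ _ => d = c
  | PSum P1 P2 => rcv_proc P1 c \/ rcv_proc P2 c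
  | PFix _ P' => rcv_proc P' c
  | _ => False
  end.

(* for nu d.W, alpha-conversion makes d distinct from c: receivers on the
   bound channel d never count as receivers on c *)
Fixpoint rcv_sys (W : sys) (c : chan) : Prop :=
  match W with
  | SProc P => rcv_proc P c
  | SActRcv _ _ _ => False
  | SPar W1 W2 => rcv_sys W1 c \/ rcv_sys W2 c
  | SRes d _ _ W' => d <> c /\ rcv_sys W' c
  end.

Definition rcv_conf (G : env) (W : sys) (c : chan) : Prop :=
  idle G c /\ rcv_sys W c.

Definition btrue (G : env) (b : bexp) : Prop :=
  match b with
  | BEq e1 e2 => eval e1 = eval e2
  | BExp c => exposed G c
  end.

Inductive step : env -> sys -> action -> sys -> Prop :=
| st_Snd : forall G c e P v,
    eval e = Some v ->
    step G (SProc (PSnd c e P)) (ASnd c v) (SProc (sigman (delta v) P))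
| st_Rcv : forall G c x P Q v,
    idle G c ->
    step G (SProc (PRcv c x P Q)) (ARcv c v) (SActRcv c x P)
| st_RcvIgn : forall G W c v,
    ~ rcv_conf G W c ->
    step G W (ARcv c v) W
| st_SyncL : forall G W1 W2 W1' W2' c v,
    step G W1 (ASnd c v) W1' -> step G W2 (ARcv c v) W2' ->
    step G (SPar W1 W2) (ASnd c v) (SPar W1' W2')
| st_SyncR : forall G W1 W2 W1' W2' c v,
    step G W1 (ARcv c v) W1' -> step G W2 (ASnd c v) W2' ->
    step G (SPar W1 W2) (ASnd c v) (SPar W1' W2')
| st_RcvPar : forall G W1 W2 W1' W2' c v,
    step G W1 (ARcv c v) W1' -> step G W2 (ARcv c v) W2' ->
    step G (SPar W1 W2) (ARcv c v) (SPar W1' W2')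
| st_TimeNil : forall G,
    step G (SProc PNil) ASig (SProc PNil)
| st_Sleep : forall G P,
    step G (SProc (PSig P)) ASig (SProc P)
| st_ActRcv : forall G c x P,
    fst (G c) > 1 ->
    step G (SActRcv c x P) ASig (SActRcv c x P)
| st_EndRcv : forall G c x P w,
    G c = (1, w) ->
    step G (SActRcv c x P) ASig (SProc (subst w x P))
| st_Timeout : forall G c x P Q,
    idle G c ->
    step G (SProc (PRcv c x P Q)) ASig (SProc Q)
| st_RcvLate : forall G c x P Q,
    exposed G c ->
    step G (SProc (PRcv c x P Q)) ATau (SActRcv c x (subst CErr x P))
| st_Tau : forall G P,
    step G (SProc (PTau P)) ATau (SProc P)
| st_Then : forall G b P Q,
    btrue G b ->
    step G (SProc (PCond b P Q)) ATau (SProc (PSig P))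
| st_Else : forall G b P Q,
    ~ btrue G b ->
    step G (SProc (PCond b P Q)) ATau (SProc (PSig Q))
| st_TimePar : forall G W1 W2 W1' W2',
    step G W1 ASig W1' -> step G W2 ASig W2' ->
    step G (SPar W1 W2) ASig (SPar W1' W2')
| st_TauParL : forall G W1 W2 W1',
    step G W1 ATau W1' ->
    step G (SPar W1 W2) ATau (SPar W1' W2)
| st_TauParR : forall G W1 W2 W2',
    step G W2 ATau W2' ->
    step G (SPar W1 W2) ATau (SPar W1 W2')
| st_Rec : forall G X P l W,
    step G (SProc (psubst (PFix X P) X P)) l W ->
    step G (SProc (PFix X P)) l W
| st_SumL : forall G P Q l W,
    (l = ATau \/ exists c v, l = ASnd c v) ->
    step G (SProc P) l W ->
    step G (SProc (PSum P Q)) l W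
| st_SumR : forall G P Q l W,
    (l = ATau \/ exists c v, l = ASnd c v) ->
    step G (SProc Q) l W ->
    step G (SProc (PSum P Q)) l W
| st_SumTime : forall G P Q P' Q',
    step G (SProc P) ASig (SProc P') -> step G (SProc Q) ASig (SProc Q') ->
    step G (SProc (PSum P Q)) ASig (SProc (PSum P' Q'))
| st_SumRcvL : forall G P Q c v W,
    step G (SProc P) (ARcv c v) W -> rcv_conf G (SProc P) c ->
    step G (SProc (PSum P Q)) (ARcv c v) W
| st_SumRcvR : forall G P Q c v W,
    step G (SProc Q) (ARcv c v) W -> rcv_conf G (SProc Q) c ->
    step G (SProc (PSum P Q)) (ARcv c v) W
| st_ResI : forall G c n v W w W',
    step (upd G c (n, v)) W (ASnd c w) W' ->
    step G (SRes c n v W) ATau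
      (SRes c (fst (act_env (ASnd c w) (upd G c (n, v)) c))
              (snd (act_env (ASnd c w) (upd G c (n, v)) c)) W')
| st_ResV : forall G c n v W l W',
    step (upd G c (n, v)) W l W' ->
    ~ occurs_in c l ->
    step G (SRes c n v W) l
      (SRes c (fst (act_env l (upd G c (n, v)) c))
              (snd (act_env l (upd G c (n, v)) c)) W').

End CCCP.

(* Time determinism is a structural property of the rules: each syntactic form has at most
   one sigma-rule applicable in a given environment, the only overlap being an active
   receiver, where (ActRcv) needs a remaining transmission time above 1 and (EndRcv) needs
   it to equal 1.  Induction on one derivation and inversion of the other then suffices. *)
From Stdlib Require Import Lia.

Section TimeDeterminism.

Variables (K F : Type) (interp : F -> list (cval K) -> cval K) (delta : cval K -> nat).

Notation step := (step interp delta).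

Lemma step_sig_deterministic (G : env K) (W W1 W2 : sys K F) :
  step G W (ASig K) W1 -> step G W (ASig K) W2 -> W1 = W2.
Proof.
  remember (ASig K) as l.
  intros H1; revert W2; induction H1; intros W0 H2; try discriminate; subst;
    inversion H2; subst; try discriminate; try reflexivity;
    (* (Sum) is restricted to tau and broadcast labels *)
    try (match goal with H : ASig K = ATau K \/ _ |- _ =>
           destruct H as [? | (? & ? & ?)]; discriminate end).
  - match goal with E : G c = (1, _) |- _ => rewrite E in *; simpl in *; lia end.
  - match goal with E : G c = (1, _) |- _ => rewrite E in *; simpl in *; lia end.
  - match goal with E : G c = (1, ?w), E' : G c = (1, ?w') |- _ =>
      rewrite E in E'; injection E' as ->; reflexivity end.
  - f_equal; auto.
  - auto.
  - match goal with |- _ = SProc (PSum ?P2 ?Q2) =>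
      assert (EP : SProc P' = SProc P2) by auto;
      assert (EQ : SProc Q' = SProc Q2) by auto;
      congruence end.
  - f_equal; auto.
Qed.

End TimeDeterminism.

Theorem mainTheorem2 (K F : Type) (interp : F -> list (cval K) -> cval K)
  (delta : cval K -> nat) (delta_pos : forall v, 1 <= delta v)
  (G : env K) (W W1 W2 : sys K F) :
  config_term W ->
  step interp delta G W (ASig K) W1 ->
  step interp delta G W (ASig K) W2 ->
  W1 = W2.
Proof.
  intros _; apply step_sig_deterministic.
Qed.
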